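(* Let $n\ge 3$ and $3\le i\le n$. Then the subgroup $H_{\Delta_i}=\langle P_n(D),\Delta_i\rangle$ of $B_n(D)$ is not bi-orderable, where $\Delta_i=\sigma_1(\sigma_2\sigma_1)\cdots(\sigma_{i-1}\cdots\sigma_2\sigma_1)$.
   Context: $B_n(D)$ is the Artin braid group on $n$ strands, with generators $\sigma_1,\dots,\sigma_{n-1}$ and relations $\sigma_i\sigma_j=\sigma_j\sigma_i$ for $|i-j|\ge 2$ and $\sigma_i\sigma_{i+1}\sigma_i=\sigma_{i+1}\sigma_i\sigma_{i+1}$. The permutation homomorphism $\pi: B_n(D)\to S_n$ is given by $\pi(\sigma_i)=(i,i+1)$, and $P_n(D)=\ker\pi$. $\langle P_n(D),\beta\rangle$ is the subgroup generated by $P_n(D)$ and $\beta$. A group is bi-orderable if it admits a strict total ordering invariant under both left and right multiplication. *)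

(* Artin braid group B_n given by its presentation:
   elements = words in the generators sigma_k^{+-1} (1 <= k <= n-1) modulo the
   congruence generated by free cancellation and the braid relations. *)
From mathcomp Require Import all_boot.
Set Implicit Arguments. Unset Strict Implicit. Unset Printing Implicit Defensive.

(* a letter (k, true) is sigma_k, (k, false) is sigma_k^{-1} *)
Definition letter := (nat * bool)%type.
Definition word := seq letter.

Definition valid_gen (n k : nat) : bool := (1 <= k) && (k < n).
Definition valid_word (n : nat) (w : word) : bool := all (fun l => valid_gen n l.1) w.

Definition inv_word (w : word) : word := rev [seq (l.1, ~~ l.2) | l <- w].

(* defining relations of B_n (as a monoid presentation of the group) *)
Inductive braid_rel (n : nat) : word -> word -> Prop :=
| br_cancel k b : valid_gen n k -> braid_rel n [:: (k, b); (k, ~~ b)] [::]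
| br_comm j k : valid_gen n j -> valid_gen n k -> (j.+2 <= k) || (k.+2 <= j) ->
    braid_rel n [:: (j, true); (k, true)] [:: (k, true); (j, true)]
| br_braid k : valid_gen n k -> valid_gen n k.+1 ->
    braid_rel n [:: (k, true); (k.+1, true); (k, true)]
                [:: (k.+1, true); (k, true); (k.+1, true)].

Inductive braid_eq (n : nat) : word -> word -> Prop :=
| be_refl w : braid_eq n w w
| be_sym u v : braid_eq n u v -> braid_eq n v u
| be_trans u v w : braid_eq n u v -> braid_eq n v w -> braid_eq n u w
| be_step u x y v : braid_rel n x y -> braid_eq n (u ++ x ++ v) (u ++ y ++ v).

Definition swapn (k m : nat) : nat :=
  if m == k then k.+1 else if m == k.+1 then k else m.
Definition perm_of_word (w : word) : nat -> nat :=
  foldr (fun l f => fun m => swapn l.1 (f m)) id w.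

Definition pure_braid (n : nat) (w : word) : Prop :=
  valid_word n w /\ forall m, perm_of_word w m = m.

(* Delta_i = sigma_1 (sigma_2 sigma_1) ... (sigma_{i-1} ... sigma_2 sigma_1) *)
Definition Delta (i : nat) : word :=
  flatten [seq [seq (k, true) | k <- rev (iota 1 j)] | j <- iota 1 i.-1].

(* the subgroup < P_n(D), beta > of B_n(D), as a set of words closed under braid_eq *)
Inductive in_PB (n : nat) (beta : word) : word -> Prop :=
| pb_pure w : pure_braid n w -> in_PB n beta w
| pb_gen : valid_word n beta -> in_PB n beta beta
| pb_mul u v : in_PB n beta u -> in_PB n beta v -> in_PB n beta (u ++ v)
| pb_inv u : in_PB n beta u -> in_PB n beta (inv_word u)
| pb_eq u v : in_PB n beta u -> braid_eq n u v -> in_PB n beta v.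

(* a subgroup H of B_n (given as a braid_eq-closed set of words) is bi-orderable:
   there is a strict total order on H (well defined on B_n-classes) invariant
   under left and right multiplication by elements of H *)
Definition bi_orderable_sub (n : nat) (H : word -> Prop) : Prop :=
  exists lt : word -> word -> Prop,
    (forall u u' v v', H u -> H v -> braid_eq n u u' -> braid_eq n v v' ->
           lt u v -> lt u' v') /\
        (forall u, H u -> ~ lt u u) /\
        (forall u v w, H u -> H v -> H w -> lt u v -> lt v w -> lt u w) /\
        (forall u v, H u -> H v -> ~ braid_eq n u v -> (lt u v \/ lt v u)) /\
        (forall g u v, H g -> H u -> H v -> lt u v -> lt (g ++ u) (g ++ v)) /\
        (forall g u v, H g -> H u -> H v -> lt u v -> lt (u ++ g) (v ++ g)).

(* The braid x = sigma_1^2 sigma_(i-1)^-2 is pure and nontrivial: strands 1 and 2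
   cross twice in it, and signed crossing counts between pairs of strands are
   invariant under the braid relations.  Conjugation by Delta_i maps sigma_k to
   sigma_(i-k), hence maps x to sigma_(i-1)^2 sigma_1^-2 = x^-1.  A bi-order is
   preserved by conjugation, so x and x^-1 would lie on the same side of 1. *)

From Stdlib Require Import ZArith.
From mathcomp Require Import all_boot zify.
Set Implicit Arguments.

Section BraidCongruence.
Variable n : nat.

Lemma braid_eq_ctx a b x y :
  braid_eq n x y -> braid_eq n (a ++ x ++ b) (a ++ y ++ b).
Proof.
elim=> [w | u v _ | u v w _ IHuv _ IHvw | u x' y' v xy].
- exact: be_refl.
- exact: be_sym.
- exact: be_trans IHvw.
- by have := be_step (a ++ u) (v ++ b) xy; rewrite -!catA.
Qed.

Lemma braid_eq_cat u u' v v' :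
  braid_eq n u u' -> braid_eq n v v' -> braid_eq n (u ++ v) (u' ++ v').
Proof.
move=> uu' vv'; apply: (@be_trans _ _ (u' ++ v)).
- by have := braid_eq_ctx [::] v uu'.
- by have := braid_eq_ctx u' [::] vv'; rewrite !cats0.
Qed.

Lemma braid_eq_catl a x y : braid_eq n x y -> braid_eq n (a ++ x) (a ++ y).
Proof. exact/braid_eq_cat/be_refl. Qed.

Lemma braid_eq_catr b x y : braid_eq n x y -> braid_eq n (x ++ b) (y ++ b).
Proof. by move/braid_eq_cat; apply; apply: be_refl. Qed.

Lemma braid_rel_valid x y : braid_rel n x y -> valid_word n x && valid_word n y.
Proof.
by case=> [k b vk | j k vj vk _ | k vk vk1]; rewrite /valid_word /= ?vj ?vk ?vk1.
Qed.

Lemma braid_eq_valid u v : braid_eq n u v -> valid_word n u = valid_word n v.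
Proof.
elim=> [// | u' v' _ uv | u' v' w _ uv _ vw | u' x y v' /braid_rel_valid].
- by rewrite uv.
- by rewrite uv vw.
by case/andP=> vx vy; rewrite /valid_word !all_cat -!/(valid_word n _) vx vy.
Qed.

Lemma inv_word_cons l w : inv_word (l :: w) = inv_word w ++ [:: (l.1, ~~ l.2)].
Proof. by rewrite /inv_word /= rev_cons cats1. Qed.

Lemma valid_word_inv w : valid_word n (inv_word w) = valid_word n w.
Proof. by rewrite /valid_word /inv_word all_rev all_map. Qed.

Lemma cat_inv_word w : valid_word n w -> braid_eq n (w ++ inv_word w) [::].
Proof.
elim: w => [|[k b] w IHw] /=; first by move=> _; apply: be_refl.
case/andP=> vk /IHw ww'; rewrite inv_word_cons.
apply: (@be_trans _ _ ([:: (k, b)] ++ [::] ++ [:: (k, ~~ b)])).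
  by have := braid_eq_ctx [:: (k, b)] [:: (k, ~~ b)] ww'; rewrite -!catA.
exact: (be_step [::] [::] (br_cancel b vk)).
Qed.

Lemma in_PB_valid beta w : in_PB n beta w -> valid_word n w.
Proof.
elim=> [u [] | | u v _ vu _ vv | u _ vu | u v _ vu /braid_eq_valid <-] //.
- by rewrite /valid_word all_cat -!/(valid_word n _) vu vv.
- by rewrite valid_word_inv.
Qed.

End BraidCongruence.

Lemma not_bi_orderable_of_conj_inv n beta g x :
  in_PB n beta g -> in_PB n beta x -> ~ braid_eq n x [::] ->
  braid_eq n (g ++ x ++ inv_word g) (inv_word x) ->
  ~ bi_orderable_sub n (in_PB n beta).
Proof.
move=> Hg Hx x_ne1 gxg [lt [lt_wd [lt_irr [lt_trans [lt_total [lt_mull lt_mulr]]]]]].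
have H1 : in_PB n beta [::] by apply: pb_pure.
have Hxi : in_PB n beta (inv_word x) by apply: pb_inv.
have Hconj a : in_PB n beta a -> in_PB n beta (g ++ a ++ inv_word g).
  by move=> Ha; do 2!apply: pb_mul => //; apply: pb_inv.
have lt_conj a b : in_PB n beta a -> in_PB n beta b -> lt a b ->
    lt (g ++ a ++ inv_word g) (g ++ b ++ inv_word g).
  move=> Ha Hb ab; rewrite !catA.
  exact: lt_mulr (pb_inv Hg) (pb_mul Hg Ha) (pb_mul Hg Hb) (lt_mull _ _ _ Hg Ha Hb ab).
have g1g : braid_eq n (g ++ [::] ++ inv_word g) [::].
  exact: @cat_inv_word n g (in_PB_valid Hg).
have xxi := @cat_inv_word n x (in_PB_valid Hx).
have x1 : braid_eq n (x ++ [::]) x by rewrite cats0; apply: be_refl.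
(* conjugation by g preserves lt but exchanges x and x^-1 *)
have [x_lt1 | x_gt1] := lt_total _ _ Hx H1 x_ne1.
- have xi_lt1 : lt (inv_word x) [::].
    exact: (lt_wd _ _ _ _ (Hconj _ Hx) (Hconj _ H1) gxg g1g (lt_conj _ _ Hx H1 x_lt1)).
  have one_lt_x : lt [::] x.
    by apply: (lt_wd _ _ _ _ _ _ _ _ (lt_mull _ _ _ Hx Hxi H1 xi_lt1)) => //; apply: pb_mul.
  exact: lt_irr _ Hx (lt_trans _ _ _ Hx H1 Hx x_lt1 one_lt_x).
- have one_lt_xi : lt [::] (inv_word x).
    exact: (lt_wd _ _ _ _ (Hconj _ H1) (Hconj _ Hx) g1g gxg (lt_conj _ _ H1 Hx x_gt1)).
  have x_lt1 : lt x [::].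
    by apply: (lt_wd _ _ _ _ _ _ _ _ (lt_mull _ _ _ Hx H1 Hxi one_lt_xi)) => //; apply: pb_mul.
  exact: lt_irr _ H1 (lt_trans _ _ _ H1 Hx H1 x_gt1 x_lt1).
Qed.

Definition sigma k : letter := (k, true).

Fixpoint desc j : word := if j is j'.+1 then sigma j :: desc j' else [::].
Fixpoint asc j : word := if j is j'.+1 then asc j' ++ [:: sigma j] else [::].

Definition pos_word_lt m (w : word) : bool :=
  all (fun l : letter => l.2 && (0 < l.1 < m)) w.

Lemma Delta_succ j : Delta j.+1 = Delta j ++ desc j.
Proof.
have desc_iota m : [seq (k, true) | k <- rev (iota 1 m)] = desc m.
  by elim: m => // m IHm; rewrite -(addn1 m) iotaD rev_cat /= add1n IHm addn1.
case: j => // j; rewrite /Delta !succnK -(addn1 j) iotaD map_cat flatten_cat add1n.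
by rewrite [iota j.+1 1]/= addn1 -desc_iota /= cats0.
Qed.

Lemma pos_word_lt_desc j : pos_word_lt j.+1 (desc j).
Proof.
elim: j => //= j IHj; rewrite ltnSn /=.
by apply: sub_all IHj => -[k b] /= /andP[-> /andP[-> /leqW]].
Qed.

Lemma pos_word_lt_asc j : pos_word_lt j.+1 (asc j).
Proof.
elim: j => //= j IHj; rewrite /pos_word_lt all_cat /= ltnSn !andbT.
by apply: sub_all IHj => -[k b] /= /andP[-> /andP[-> /leqW]].
Qed.

Lemma pos_word_lt_Delta j : pos_word_lt j (Delta j).
Proof.
elim: j => // j IHj; rewrite Delta_succ /pos_word_lt all_cat.
rewrite -/(pos_word_lt j.+1 (desc j)) pos_word_lt_desc andbT.
by apply: sub_all IHj => -[k b] /= /andP[-> /andP[-> kj]]; lia.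
Qed.

Section DeltaConjugation.
Variable n : nat.

Lemma valid_pos_word m w : m <= n -> pos_word_lt m w -> valid_word n w.
Proof. by move=> mn /allP wle; apply/allP => l /wle; rewrite /valid_gen; lia. Qed.

Lemma sigma_comm j k w : 0 < j < n -> 0 < k < n -> (j.+2 <= k) || (k.+2 <= j) ->
  braid_eq n [:: sigma j, sigma k & w] [:: sigma k, sigma j & w].
Proof. exact: (fun vj vk jk => be_step [::] w (br_comm vj vk jk)). Qed.

Lemma sigma_braid k w : 0 < k -> k.+1 < n ->
  braid_eq n [:: sigma k, sigma k.+1, sigma k & w]
             [:: sigma k.+1, sigma k, sigma k.+1 & w].
Proof.
move=> k0 kn; have vk : valid_gen n k by rewrite /valid_gen; lia.
have vk1 : valid_gen n k.+1 by rewrite /valid_gen; lia.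
exact: (be_step [::] w (br_braid vk vk1)).
Qed.

Lemma pos_word_commute p m w : p < n -> m < p -> pos_word_lt m w ->
  braid_eq n (w ++ [:: sigma p]) (sigma p :: w).
Proof.
move=> pn mp; elim: w => [|[k b] w IHw] /=; first by move=> _; apply: be_refl.
case/andP=> /andP[/= -> kle] /IHw wp.
apply: (be_trans (braid_eq_catl [:: sigma k] wp)).
by apply: sigma_comm; lia.
Qed.

Lemma desc_shift j k : 1 < k <= j -> j < n ->
  braid_eq n (desc j ++ [:: sigma k]) (sigma k.-1 :: desc j).
Proof.
elim: j => [|j IHj] kj jn; first lia.
have [-> | kSj] := eqVneq k j.+1.
- case: j IHj kj jn => [|j] _ kj jn; first lia.
  rewrite /=; apply: (@be_trans _ _ ([:: sigma j.+2; sigma j.+1; sigma j.+2] ++ desc j)).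
    apply: (braid_eq_catl [:: sigma j.+2; sigma j.+1]).
    by apply: pos_word_commute (pos_word_lt_desc j); lia.
  by apply/be_sym/sigma_braid; lia.
- apply: (@be_trans _ _ [:: sigma j.+1, sigma k.-1 & desc j]).
    by apply: (braid_eq_catl [:: sigma j.+1]); apply: IHj; lia.
  by apply: sigma_comm; lia.
Qed.

Lemma asc_shift j k : 1 < k <= j -> j < n ->
  braid_eq n (sigma k :: asc j) (asc j ++ [:: sigma k.-1]).
Proof.
elim: j => [|j IHj] kj jn; first lia.
have [-> | kSj] := eqVneq k j.+1.
- case: j IHj kj jn => [|j] _ kj jn; first lia.
  rewrite /= -!catA /= -cat1s catA.
  apply: (@be_trans _ _ ((asc j ++ [:: sigma j.+2]) ++ [:: sigma j.+1; sigma j.+2])).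
    by apply/braid_eq_catr/be_sym; apply: pos_word_commute (pos_word_lt_asc j); lia.
  by rewrite -catA; apply/braid_eq_catl/be_sym/sigma_braid; lia.
- rewrite /= -cat1s catA.
  apply: (@be_trans _ _ ((asc j ++ [:: sigma k.-1]) ++ [:: sigma j.+1])).
    by apply: braid_eq_catr; apply: IHj; lia.
  by rewrite -!catA; apply: braid_eq_catl; apply: sigma_comm; lia.
Qed.

Lemma Delta_asc j : j < n -> braid_eq n (Delta j.+1) (asc j ++ Delta j).
Proof.
elim: j => [|j IHj] jn; first exact: be_refl.
rewrite Delta_succ.
apply: (@be_trans _ _ ((asc j ++ Delta j) ++ desc j.+1)).
  by apply: braid_eq_catr; apply: IHj; lia.
rewrite [Delta j.+1]Delta_succ /= -!catA; apply: braid_eq_catl.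
rewrite -cat1s !catA; apply: braid_eq_catr.
by apply: pos_word_commute (pos_word_lt_Delta j); lia.
Qed.

Lemma Delta_conj_sigma i k : i <= n -> 0 < k < i ->
  braid_eq n (Delta i ++ [:: sigma k]) (sigma (i - k) :: Delta i).
Proof.
elim: i k => [|j IHj] k jn kj; first lia.
have [k1 | k1] : k = 1 \/ 1 < k by lia.
- subst k; case: j IHj jn kj => [|[|j]] IHj jn kj; [lia | exact: be_refl |].
  apply: (@be_trans _ _ ((asc j.+2 ++ Delta j.+2) ++ [:: sigma 1])).
    by apply: braid_eq_catr; apply: Delta_asc; lia.
  apply: (@be_trans _ _ (asc j.+2 ++ sigma j.+1 :: Delta j.+2)).
    by rewrite -catA; apply: braid_eq_catl; apply: IHj; lia.
  rewrite -cat1s catA subn1 /=.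
  apply: (@be_trans _ _ ((sigma j.+2 :: asc j.+2) ++ Delta j.+2)).
    by apply/braid_eq_catr/be_sym; apply: asc_shift; lia.
  by apply: (braid_eq_catl [:: sigma j.+2]); apply/be_sym/Delta_asc; lia.
- rewrite Delta_succ -catA.
  apply: (@be_trans _ _ (Delta j ++ sigma k.-1 :: desc j)).
    by apply: braid_eq_catl; apply: desc_shift; lia.
  rewrite -cat1s catA -cat_cons (_ : j.+1 - k = j - k.-1); last lia.
  by apply: braid_eq_catr; apply: IHj; lia.
Qed.

Lemma conj_sigma_inv u k k' : 0 < k < n -> 0 < k' < n ->
  braid_eq n (u ++ [:: sigma k]) (sigma k' :: u) ->
  braid_eq n (u ++ [:: (k, false)]) ((k', false) :: u).
Proof.
move=> vk vk' conj; apply: be_sym.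
apply: (@be_trans _ _ ((k', false) :: (u ++ [:: sigma k]) ++ [:: (k, false)])).
  rewrite -catA -cat_cons -[X in braid_eq _ X]cats0; apply/braid_eq_catl/be_sym.
  exact: (be_step [::] [::] (br_cancel true vk)).
apply: (@be_trans _ _ ([:: (k', false); sigma k'] ++ u ++ [:: (k, false)])).
  exact: (braid_eq_ctx [:: (k', false)] [:: (k, false)] conj).
exact: (be_step [::] _ (br_cancel false vk')).
Qed.

Lemma Delta_conj_word i w : i <= n -> all (fun l : letter => 0 < l.1 < i) w ->
  braid_eq n (Delta i ++ w) ([seq (i - l.1, l.2) | l <- w] ++ Delta i).
Proof.
move=> inn; elim: w => [|[k b] w IHw] /=; first by rewrite cats0 => _; apply: be_refl.
case/andP=> /= ki /IHw conj_w.
have conj_k : braid_eq n (Delta i ++ [:: (k, b)]) ((i - k, b) :: Delta i).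
  have conj_sigma := Delta_conj_sigma _ _ inn ki.
  case: b; first exact: conj_sigma.
  by apply: conj_sigma_inv conj_sigma; lia.
apply: (@be_trans _ _ ((i - k, b) :: Delta i ++ w)).
  by rewrite -cat1s catA -cat_cons; apply: braid_eq_catr.
exact: (braid_eq_catl [:: (i - k, b)] conj_w).
Qed.

End DeltaConjugation.

(* A state records which strand sits at each position and, for every pair of
   strands, the signed number of crossings between them so far. *)
Definition strand_state := ((nat -> nat) * (nat -> nat -> Z))%type.

Definition pair_ind (x y a c : nat) : Z :=
  if ((x == a) && (y == c)) || ((x == c) && (y == a)) then 1%Z else 0%Z.

Definition sgnZ (b : bool) : Z := if b then 1%Z else (-1)%Z.

Definition cross (l : letter) (s : strand_state) : strand_state :=
  (s.1 \o swapn l.1,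
   fun x y => (s.2 x y + sgnZ l.2 * pair_ind x y (s.1 l.1) (s.1 l.1.+1))%Z).

Definition run (w : word) (s : strand_state) : strand_state :=
  foldl (fun s l => cross l s) s w.

Definition state_eq (s t : strand_state) := s.1 =1 t.1 /\ s.2 =2 t.2.

Lemma run_cat u v s : run (u ++ v) s = run v (run u s).
Proof. exact: foldl_cat. Qed.

Lemma run_state_eq w s t : state_eq s t -> state_eq (run w s) (run w t).
Proof.
elim: w s t => //= l w IHw s t [eq1 eq2]; apply: IHw.
by split=> [m | x y] /=; rewrite ?eq1 ?eq2.
Qed.

(* Splits on the innermost nat equality tests first, then closes by arithmetic. *)
Ltac case_nat_eqs :=
  repeat (match goal with
  | |- context [?a == ?b] =>
      lazymatch a with context [if _ then _ else _] => fail | _ =>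
      lazymatch b with context [if _ then _ else _] => fail | _ =>
        case: (eqVneq a b) => ? end end
  end; simpl); try lia.

Lemma swapnK k : involutive (swapn k).
Proof. by move=> m; rewrite /swapn; case_nat_eqs. Qed.

Lemma pair_indC x y a c : pair_ind x y a c = pair_ind x y c a.
Proof. by rewrite /pair_ind orbC. Qed.

Lemma braid_rel_run n x y s : braid_rel n x y -> state_eq (run x s) (run y s).
Proof.
case: s => p c; case=> [k b _ | j k _ _ jk | k _ _]; split=> [m | u v] /=;
  rewrite /swapn /=; case_nat_eqs.
- by congr p; lia.
- by congr p; lia.
- by rewrite [pair_ind _ _ (p k.+1) _]pair_indC; case: b; cbn [negb sgnZ]; lia.
Qed.

Lemma braid_eq_run n u v s : braid_eq n u v -> state_eq (run u s) (run v s).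
Proof.
move=> uv; elim: uv s => {u v} [w | u v _ IH | u v w _ IH1 _ IH2 | u x y v xy] s.
- by [].
- by case: (IH s) => eq1 eq2; split=> [m | a b]; rewrite ?eq1 ?eq2.
- case: (IH1 s) (IH2 s) => [eq1 eq2] [eq3 eq4].
  by split=> [m | a b]; rewrite ?eq1 ?eq2 ?eq3 ?eq4.
- by rewrite !run_cat; apply: run_state_eq; apply: braid_rel_run xy.
Qed.

Lemma sigma1_sq_sigma_inv_sq_neq1 n j : 1 < j ->
  ~ braid_eq n [:: sigma 1; sigma 1; (j, false); (j, false)] [::].
Proof.
move=> j1 /(braid_eq_run (id, fun _ _ => 0%Z)) [_ /(_ 1 2)].
cbn -[Z.add Z.mul pair_ind swapn]; rewrite !swapnK /pair_ind /swapn.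
case_nat_eqs.
Qed.

Theorem mainTheorem10 (n i : nat) :
  3 <= n -> 3 <= i <= n -> ~ bi_orderable_sub n (in_PB n (Delta i)).
Proof.
move=> _ /andP[i3 iln].
pose x : word := [:: sigma 1; sigma 1; (i.-1, false); (i.-1, false)].
have vDelta : valid_word n (Delta i) := valid_pos_word _ _ _ iln (pos_word_lt_Delta i).
have Delta_in : in_PB n (Delta i) (Delta i) by apply: pb_gen.
have x_in : in_PB n (Delta i) x.
  apply: pb_pure; split=> [|m]; last by rewrite /= !swapnK.
  by rewrite /valid_word /= /valid_gen; lia.
apply: (not_bi_orderable_of_conj_inv Delta_in x_in).
  by apply: sigma1_sq_sigma_inv_sq_neq1; lia.
have -> : inv_word x = [seq (i - l.1, l.2) | l <- x].
  by rewrite /= (_ : i - i.-1 = 1) ?subn1 //; lia.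
have x_range : all (fun l : letter => 0 < l.1 < i) x by rewrite /=; lia.
rewrite catA; apply: (be_trans (braid_eq_catr _ (Delta_conj_word _ _ _ iln x_range))).
rewrite -catA -[X in braid_eq _ _ X]cats0; apply: braid_eq_catl.
exact: cat_inv_word.
Qed.
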